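(* Let $R$ be a finite commutative ring with Jacobson radical $\mathcal{J}$, let $I\subseteq\mathcal{J}$ be an ideal, let $n\ge1$, and let $K$ be a field of characteristic zero. Then the natural map induces an isomorphism of $\mathrm{GL}_n(R)$-representations $$\mathrm{St}^K_n(R)^{\Gamma_n(I)}\cong\mathrm{St}^K_n(R/I).$$
   Context: A flag in $R^n$ is a chain $0\subsetneq V_1\subsetneq\cdots\subsetneq V_k\subsetneq R^n$ of free direct summands; complete if $k=n-1$, good if it is a subflag of a complete flag. The Tits complex $\mathcal{T}_n(R)$ has as vertices the direct summands $V$ of $R^n$, $0\ne V\ne R^n$, with $V$ and $R^n/V$ free, and a $k$-simplex for every good flag with $k+1$ terms; $\mathrm{GL}_n(R)$ acts on it. $\mathrm{St}^K_n(R)=\tilde H_{n-2}(\mathcal{T}_n(R);K)$, a $\mathrm{GL}_n(R)$-representation. The map $R\to R/I$ induces (via $V\mapsto V\otimes_R R/I$) an equivariant simplicial map $\mathcal{T}_n(R)\to\mathcal{T}_n(R/I)$, hence $\mathrm{St}^K_n(R)\to \mathrm{St}^K_n(R/I)$, where $\mathrm{GL}_n(R)$ acts on the target through $\mathrm{GL}_n(R)\to\mathrm{GL}_n(R/I)$. $\Gamma_n(I)=\ker(\mathrm{GL}_n(R)\to\mathrm{GL}_n(R/I))$, and $(\cdot)^{\Gamma_n(I)}$ denotes invariants. *)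

From HB Require Import structures.
From mathcomp Require Import all_boot all_order all_algebra.
Set Implicit Arguments. Unset Strict Implicit. Unset Printing Implicit Defensive.
Import GRing.Theory.
Local Open Scope ring_scope.

Section Defs.
Variable R : finComPzRingType.

Definition is_ideal (I : {set R}) : Prop :=
  0 \in I /\ (forall x y, x \in I -> y \in I -> x + y \in I) /\
  (forall r x, x \in I -> r * x \in I).

Definition is_maximal_ideal (I : {set R}) : Prop :=
  is_ideal I /\ 1 \notin I /\
  (forall J : {set R}, is_ideal J -> I \subset J -> J = I \/ 1 \in J).

Definition in_jacobson (x : R) : Prop :=
  forall M : {set R}, is_maximal_ideal M -> x \in M.

Variable n : nat.
Notation V := 'cV[R]_n.

Definition is_submodule (A : {set V}) : Prop :=
  0 \in A /\ (forall x y, x \in A -> y \in A -> x + y \in A) /\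
  (forall (r : R) x, x \in A -> r *: x \in A).

(* [free_mod A B]: the module A/B is free, i.e. there are b_1..b_k in A
   whose classes modulo B form a basis of A/B.  With B = 0 this says A is
   free; with A = R^n it says R^n/B is free. *)
Definition free_mod (A B : {set V}) : Prop :=
  exists (k : nat) (b : 'I_k -> V),
    (forall i, b i \in A) /\
    (forall x, x \in A -> exists (a : 'I_k -> R) (y : V),
        y \in B /\ x = \sum_i a i *: b i + y) /\
    (forall a : 'I_k -> R, \sum_i a i *: b i \in B -> forall i, a i = 0).

Definition is_direct_summand (A : {set V}) : Prop :=
  exists W : {set V}, is_submodule W /\ A :&: W = [set 0] /\
    (forall x : V, exists y z, y \in A /\ z \in W /\ x = y + z).

Definition tits_vertex (A : {set V}) : Prop :=
  [/\ is_submodule A, A != [set 0], A != setT, is_direct_summand A &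
      (free_mod A [set 0] /\ free_mod setT A)].

Definition is_flag (s : seq {set V}) : Prop :=
  (forall A, A \in s -> tits_vertex A) /\ sorted (fun A B : {set V} => A \proper B) s.

Definition is_complete_flag (s : seq {set V}) : Prop :=
  is_flag s /\ size s = n.-1.

Definition is_good_flag (s : seq {set V}) : Prop :=
  is_flag s /\ exists c, is_complete_flag c /\ subseq s c.

(* ---------- augmented simplicial chain complex with coefficients in K ----
   A (m-1)-simplex is an m-term good flag, naturally oriented by inclusion;
   C_{m-1} consists of functions on m-tuples supported on good flags; the
   size-0 tuple (empty flag) gives C_{-1} = K (augmentation). *)
Variable K : fieldType.

Definition supported (m : nat) (c : m.-tuple {set V} -> K) : Prop :=
  forall s : m.-tuple {set V}, c s != 0 -> (m == 0)%N \/ is_good_flag s.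

Definition face (i : nat) (s : seq {set V}) : seq {set V} :=
  take i s ++ drop i.+1 s.

(* boundary C_{m-1} -> C_{m-2} (zero for m = 0, as C_{-2} = 0) *)
Definition bd (m : nat) (c : m.-tuple {set V} -> K)
    (t : m.-1.-tuple {set V}) : K :=
  \sum_(s : m.-tuple {set V}) \sum_(i < m)
     (if face i s == t :> seq _ then (-1) ^+ i * c s else 0).

Definition is_cycle (m : nat) (c : m.-tuple {set V} -> K) : Prop :=
  supported c /\ forall t, bd c t = 0.

Definition is_boundary (m : nat) (c : m.-tuple {set V} -> K) : Prop :=
  exists d : m.+1.-tuple {set V} -> K,
    supported d /\ forall t : m.-tuple {set V}, c t = bd d t.

Definition invertible (g : 'M[R]_n) : Prop :=
  exists h : 'M[R]_n, g *m h = 1%:M /\ h *m g = 1%:M.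

Definition act (g : 'M[R]_n) (A : {set V}) : {set V} :=
  [set g *m v | v in A].
End Defs.

Definition push (R1 R2 : finComPzRingType) (n : nat) (K : fieldType) (m : nat)
    (phi : {set 'cV[R1]_n} -> {set 'cV[R2]_n})
    (c : m.-tuple {set 'cV[R1]_n} -> K) (t : m.-tuple {set 'cV[R2]_n}) : K :=
  \sum_(s : m.-tuple {set 'cV[R1]_n} | map phi s == t :> seq _) c s.

(* V |-> V (x)_R S, realized as the image of V in S^n *)
Definition reduce (R1 R2 : finComPzRingType) (f : {rmorphism R1 -> R2}) (n : nat)
    (A : {set 'cV[R1]_n}) : {set 'cV[R2]_n} :=
  [set map_mx f v | v in A].

(* Every good flag is the image, under some g in GL_n(R), of a flag of coordinate submodules
   E_{k_1} < ... < E_{k_m}, E_k being spanned by the first k basis vectors.  A vertex V with V and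
   R^n/V free is already of the form g E_k by concatenating bases; for a complete flag the bases
   must moreover be compatible, and the missing basis vector at each step comes from a cofactor
   computation showing that a stably free module of rank one is free.  As I lies in the Jacobson
   radical, a matrix is invertible as soon as its reduction is, so good flags lift along R -> R/I
   and Gamma_n(I) acts transitively on the good flags with a given reduction.
   In top degree there are no boundaries, so St_n is the space of top cycles.  A
   Gamma_n(I)-invariant cycle is constant on the fibres of the reduction, which gives injectivity;
   conversely, spreading w(t) evenly over the fibre above t (char K = 0) gives an invariant lift,
   which is a cycle because the fibres above the faces of t are all counted proportionally. *)

From Stdlib Require Import Classical ClassicalEpsilon.
From HB Require Import structures.
From mathcomp Require Import all_boot all_order all_algebra zify.
Set Implicit Arguments. Unset Strict Implicit. Unset Printing Implicit Defensive.
Import GRing.Theory.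
Local Open Scope ring_scope.

Lemma ord_ltn_eqF n (r s : 'I_n) : (r < s)%N -> (r == s) = false.
Proof. exact: ltn_eqF. Qed.

Lemma ord_gtn_eqF n (r s : 'I_n) : (s < r)%N -> (r == s) = false.
Proof. exact: gtn_eqF. Qed.

Lemma sum_natr_eq_mull (T : pzSemiRingType) n (i : 'I_n) (F : 'I_n -> T) :
  \sum_l ((l == i)%:R * F l) = F i.
Proof.
rewrite (bigD1 i) //= eqxx mul1r big1 ?addr0 // => l /negbTE ->; by rewrite mul0r.
Qed.

Lemma sum_natr_eq_mulr (T : pzSemiRingType) n (i : 'I_n) (F : 'I_n -> T) :
  \sum_l ((i == l)%:R * F l) = F i.
Proof. by under eq_bigr do rewrite eq_sym; apply: sum_natr_eq_mull. Qed.

Lemma mulmx_delta_col (T : pzSemiRingType) m n (M : 'M[T]_(m, n)) (s : 'I_n) r :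
  (M *m delta_mx s (0 : 'I_1)) r 0 = M r s.
Proof.
rewrite mxE (bigD1 s) //= mxE !eqxx mulr1 big1 ?addr0 // => l /negbTE ls.
by rewrite mxE ls mulr0.
Qed.

Section Invertible.
Variables (T : finComPzRingType) (n : nat).
Implicit Types P Q : 'M[T]_n.

Lemma invertible_mulmx1 P Q : P *m Q = 1%:M -> invertible P.
Proof. by move=> PQ; exists Q; split => //; apply: mulmx1C. Qed.

Lemma invertible_det P e : \det P * e = 1 -> invertible P.
Proof.
move=> de; apply: (@invertible_mulmx1 _ (e *: \adj P)).
by rewrite -scalemxAr mul_mx_adj scale_scalar_mx mulrC de.
Qed.

Lemma det_invertible P : invertible P -> exists e, \det P * e = 1.
Proof. by case=> Q [PQ _]; exists (\det Q); rewrite -det_mulmx PQ det1. Qed.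

Lemma invertibleM P Q : invertible P -> invertible Q -> invertible (P *m Q).
Proof.
case=> P' [PP' _] [Q' [QQ' _]]; apply: (@invertible_mulmx1 _ (Q' *m P')).
by rewrite mulmxA -(mulmxA P) QQ' mulmx1 PP'.
Qed.

Lemma invertible1 : invertible (1%:M : 'M[T]_n).
Proof. by exists 1%:M; rewrite mulmx1. Qed.

Lemma invertible_mulmx_inj m P : invertible P -> injective (fun v : 'M[T]_(n, m) => P *m v).
Proof.
case=> Q [_ QP] u v /= e; by rewrite -(mul1mx u) -(mul1mx v) -QP -!mulmxA e.
Qed.

(* On a finite module a surjective endomorphism has a right inverse; [mulmx1C] makes it two-sided. *)
Lemma invertible_surj P : (forall x : 'cV[T]_n, exists v, P *m v = x) -> invertible P.
Proof.
move=> Psurj; pose pre (x : 'cV[T]_n) := odflt 0 [pick v | P *m v == x].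
have preP (x : 'cV[T]_n) : P *m pre x = x.
  rewrite /pre; case: pickP => [v /eqP //|none].
  by case: (Psurj x) => v vx; move: (none v); rewrite vx eqxx.
apply: (@invertible_mulmx1 _ (\matrix_(r, s) pre (delta_mx s 0) r 0)).
apply/matrixP => r s; rewrite [RHS]mxE mxE.
have := congr1 (fun M : 'cV_n => M r 0) (preP (delta_mx s 0)).
by rewrite !mxE eqxx andbT => <-; apply: eq_bigr => l _; rewrite !mxE.
Qed.

End Invertible.

Section Action.
Variables (T : finComPzRingType) (n : nat).
Implicit Types (P Q : 'M[T]_n) (A B : {set 'cV[T]_n}).

Lemma actM P Q A : act (P *m Q) A = act P (act Q A).
Proof. by rewrite /act -imset_comp; apply: eq_imset => v /=; rewrite mulmxA. Qed.

Lemma act1 A : act 1%:M A = A.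
Proof.
apply/setP => v; apply/imsetP/idP => [[u uA ->]|vA]; first by rewrite mul1mx.
by exists v; rewrite ?mul1mx.
Qed.

Lemma actK P Q A : Q *m P = 1%:M -> act Q (act P A) = A.
Proof. by move=> QP; rewrite -actM QP act1. Qed.

Lemma mem_act P A v : v \in A -> P *m v \in act P A.
Proof. by move=> vA; apply/imsetP; exists v. Qed.

Lemma act_set0 P : act P [set 0] = [set 0].
Proof. by rewrite /act imset_set1 mulmx0. Qed.

Lemma card_act P A : invertible P -> #|act P A| = #|A|.
Proof. by move=> iP; rewrite card_imset //; apply: invertible_mulmx_inj. Qed.

Lemma act_inj P A B : invertible P -> act P A = act P B -> A = B.
Proof. by case=> Q [_ QP] e; rewrite -(actK A QP) -(actK B QP) e. Qed.

Lemma act_subsetE P A B : invertible P -> (act P A \subset act P B) = (A \subset B).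
Proof.
move=> iP; apply/idP/idP; last exact: imsetS.
case: (iP) => Q [_ QP] sub; rewrite -(actK A QP) -(actK B QP); exact: imsetS.
Qed.

Lemma act_properE P A B : invertible P -> (act P A \proper act P B) = (A \proper B).
Proof. by move=> iP; rewrite /proper !act_subsetE. Qed.

Lemma act_setT P : invertible P -> act P setT = setT.
Proof. by move=> iP; apply/eqP; rewrite eqEcard subsetT card_act // leqnn. Qed.

Lemma act_setI P A B : invertible P -> act P (A :&: B) = act P A :&: act P B.
Proof. by move=> iP; apply: imsetI => u v _ _; apply: invertible_mulmx_inj. Qed.

End Action.

Definition coord_sub (T : finComPzRingType) n k : {set 'cV[T]_n} :=
  [set v : 'cV[T]_n | [forall i : 'I_n, (k <= i)%N ==> (v i 0 == 0)]].

Definition coord_cosub (T : finComPzRingType) n k : {set 'cV[T]_n} :=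
  [set v : 'cV[T]_n | [forall i : 'I_n, (i < k)%N ==> (v i 0 == 0)]].

(* For a free submodule [A], [#|A| = #|T| ^ rank_of A]. *)
Definition rank_of (T : finComPzRingType) n (A : {set 'cV[T]_n}) : nat :=
  trunc_log #|T| #|A|.

Section Submodules.
Variables (T : finComPzRingType) (n : nat).
Local Notation V := 'cV[T]_n.
Local Notation E := (coord_sub T n).
Implicit Types (P Q : 'M[T]_n) (A B : {set V}).

Lemma mem_coord_subP k (v : V) : reflect (forall i : 'I_n, (k <= i)%N -> v i 0 = 0) (v \in E k).
Proof.
rewrite inE; apply: (iffP forallP) => [h i ki|h i]; first by move/implyP/(_ ki)/eqP: (h i).
by apply/implyP => ki; rewrite h.
Qed.

Lemma mem_coord_cosubP k (v : V) :
  reflect (forall i : 'I_n, (i < k)%N -> v i 0 = 0) (v \in coord_cosub T n k).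
Proof.
rewrite inE; apply: (iffP forallP) => [h i ki|h i]; first by move/implyP/(_ ki)/eqP: (h i).
by apply/implyP => ki; rewrite h.
Qed.

Lemma coord_sub0 : E 0 = [set 0].
Proof.
apply/setP => v; rewrite in_set1; apply/mem_coord_subP/eqP => [h|->]; last first.
  by move=> i _; rewrite mxE.
by apply/matrixP => i j; rewrite ord1 h // mxE.
Qed.

Lemma coord_subT k : (n <= k)%N -> E k = setT.
Proof.
move=> nk; apply/setP => v; rewrite in_setT; apply/mem_coord_subP => i ki.
by move: (ltn_ord i); rewrite ltnNge (leq_trans nk ki).
Qed.

Lemma coord_sub_delta (s : 'I_n) k : (s < k)%N -> delta_mx s 0 \in E k.
Proof.
move=> sk; apply/mem_coord_subP => i ki; rewrite mxE; case: eqP => // ie.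
by move: sk; rewrite -ie ltnNge ki.
Qed.

Lemma coord_sub_neq0 k : (1 != 0 :> T) -> (0 < k)%N -> (k <= n)%N -> E k != [set 0].
Proof.
move=> nz k0 kn; have k0n := leq_trans k0 kn.
apply/eqP => /setP /(_ (delta_mx (Ordinal k0n) 0)); rewrite coord_sub_delta // in_set1.
by move=> /esym /eqP /matrixP /(_ (Ordinal k0n) 0); rewrite !mxE !eqxx => /eqP; apply/negP.
Qed.

Lemma coord_sub_neqT k : (1 != 0 :> T) -> (k < n)%N -> E k != setT.
Proof.
move=> nz kn; apply/eqP => /setP /(_ (delta_mx (Ordinal kn) 0)); rewrite in_setT.
by move/mem_coord_subP/(_ (Ordinal kn) (leqnn k)); rewrite !mxE !eqxx; apply/eqP.
Qed.

(* Columns beyond [k] act by zero on [E k]. *)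
Lemma act_coord_sub_cols P P' k :
  (forall r s : 'I_n, (s < k)%N -> P' r s = P r s) -> act P' (E k) = act P (E k).
Proof.
move=> h.
have e v : v \in E k -> P' *m v = P *m v.
  move=> /mem_coord_subP vE; apply/matrixP => r j; rewrite ord1 !mxE; apply: eq_bigr => s _.
  by case: (ltnP s k) => sk; [rewrite h | rewrite vE // !mulr0].
apply/setP => x; apply/imsetP/imsetP => [[v vE ->]|[v vE ->]]; exists v => //; by rewrite e.
Qed.

Lemma act_coord_sub_zero P k k' :
  act P (E k) \subset E k' -> forall r s : 'I_n, (s < k)%N -> (k' <= r)%N -> P r s = 0.
Proof.
move=> /subsetP h r s sk kr.
by rewrite -mulmx_delta_col; move/mem_coord_subP: (h _ (mem_act P (coord_sub_delta sk))); apply.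
Qed.

Lemma act_coord_sub_stable P k : invertible P ->
  (forall r s : 'I_n, (s < k)%N -> (k <= r)%N -> P r s = 0) -> act P (E k) = E k.
Proof.
move=> iP h; apply/eqP; rewrite eqEcard card_act // leqnn andbT.
apply/subsetP => x /imsetP [v /mem_coord_subP vE ->]; apply/mem_coord_subP => r kr.
rewrite mxE big1 // => s _.
by case: (ltnP s k) => sk; [rewrite h // mul0r | rewrite vE // mulr0].
Qed.

Lemma submodule_sum A (I : finType) (a : I -> T) (x : I -> V) :
  is_submodule A -> (forall i, x i \in A) -> \sum_i a i *: x i \in A.
Proof.
case=> [A0 [AD AZ]] xA; apply: (big_ind (fun v => v \in A)) => // i _; exact: AZ.
Qed.

Lemma submodule_act P A : is_submodule A -> is_submodule (act P A).
Proof.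
case=> [A0 [AD AZ]]; split; first by rewrite -(mulmx0 _ P); apply: mem_act.
split=> [x y /imsetP [u uA ->] /imsetP [v vA ->]|r x /imsetP [u uA ->]].
  by rewrite -mulmxDr; apply: mem_act; apply: AD.
by rewrite scalemxAr; apply: mem_act; apply: AZ.
Qed.

Lemma submodule_coord_sub k : is_submodule (E k).
Proof.
split; first by apply/mem_coord_subP => i _; rewrite mxE.
split=> [x y /mem_coord_subP hx /mem_coord_subP hy|r x /mem_coord_subP hx];
  by apply/mem_coord_subP => i ki; rewrite !mxE ?hx ?hy ?addr0 ?mulr0.
Qed.

Lemma submodule_coord_cosub k : is_submodule (coord_cosub T n k).
Proof.
split; first by apply/mem_coord_cosubP => i _; rewrite mxE.
split=> [x y /mem_coord_cosubP hx /mem_coord_cosubP hy|r x /mem_coord_cosubP hx];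
  by apply/mem_coord_cosubP => i ki; rewrite !mxE ?hx ?hy ?addr0 ?mulr0.
Qed.

Lemma direct_summand_coord_sub k : is_direct_summand (E k).
Proof.
exists (coord_cosub T n k); split; first exact: submodule_coord_cosub.
split.
  apply/setP => x; rewrite inE in_set1.
  apply/andP/eqP => [[/mem_coord_subP xE /mem_coord_cosubP xF]|->].
    by apply/matrixP => i j; rewrite ord1 mxE; case: (ltnP i k) => ik; [rewrite xF | rewrite xE].
  by split; [apply/mem_coord_subP | apply/mem_coord_cosubP] => i _; rewrite mxE.
move=> x; exists (\col_i (if (i < k)%N then x i 0 else 0)), (\col_i (if (i < k)%N then 0 else x i 0)).
split; first by apply/mem_coord_subP => i ki; rewrite mxE ltnNge ki.
split; first by apply/mem_coord_cosubP => i ki; rewrite mxE ki.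
by apply/matrixP => i j; rewrite ord1 !mxE; case: ifP; rewrite ?addr0 ?add0r.
Qed.

Lemma direct_summand_act P A : invertible P -> is_direct_summand A -> is_direct_summand (act P A).
Proof.
move=> iP [W [subW [AW AWsum]]]; exists (act P W); split; first exact: submodule_act.
split; first by rewrite -act_setI // AW act_set0.
case: (iP) => Q [PQ _] x; have [y [z [yA [zW xyz]]]] := AWsum (Q *m x).
exists (P *m y), (P *m z); split; first exact: mem_act.
by split; [exact: mem_act | rewrite -mulmxDr -xyz mulmxA PQ mul1mx].
Qed.

Lemma free_mod_act P A B : invertible P -> free_mod A B -> free_mod (act P A) (act P B).
Proof.
move=> iP [k [b [bA [bspan bfree]]]]; exists k, (fun i => P *m b i); split.
  by move=> i; apply: mem_act.
split=> [_ /imsetP [x xA ->]|a].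
  have [a [y [yB ->]]] := bspan x xA; exists a, (P *m y); split; first exact: mem_act.
  by rewrite mulmxDr mulmx_sumr; congr (_ + _); apply: eq_bigr => i _; rewrite scalemxAr.
rewrite (eq_bigr (fun i => P *m (a i *: b i))); last by move=> i _; rewrite scalemxAr.
rewrite -mulmx_sumr => /imsetP [y yB /(invertible_mulmx_inj iP) e]; by apply: bfree; rewrite e.
Qed.

End Submodules.

Lemma card_gt1_ring (T : finComPzRingType) : (1 != 0 :> T) -> (1 < #|T|)%N.
Proof. by move=> nz; apply/card_gt1P; exists 0, 1; split => //; rewrite eq_sym. Qed.

Section CoordSplit.
Variables (T : finComPzRingType) (k l : nat).
Local Notation V := 'cV[T]_(k + l).

Lemma col_split_delta (v : V) :
  v = \sum_i v (lshift l i) 0 *: delta_mx (lshift l i) 0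
      + \sum_j v (rshift k j) 0 *: delta_mx (rshift k j) 0.
Proof.
rewrite {1}(matrix_sum_delta v) big_split_ord /=.
by congr (_ + _); apply: eq_bigr => i _; rewrite big_ord1.
Qed.

Lemma sum_delta_inj_entry (I : finType) (a : I -> T) (h : I -> 'I_(k + l)) i0 :
  injective h -> (\sum_i a i *: delta_mx (h i) (0 : 'I_1)) (h i0) 0 = a i0.
Proof.
move=> ih; rewrite summxE (bigD1 i0) //= !mxE !eqxx mulr1 big1 ?addr0 // => i ii0.
by rewrite !mxE (inj_eq ih) eq_sym (negbTE ii0) mulr0.
Qed.

Lemma coord_sub_lshift (i : 'I_k) : delta_mx (lshift l i) 0 \in coord_sub T (k + l) k.
Proof. by apply: coord_sub_delta; rewrite /= ltn_ord. Qed.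

Lemma free_coord_sub : free_mod (coord_sub T (k + l) k) [set 0].
Proof.
exists k, (fun i => delta_mx (lshift l i) 0); split; first exact: coord_sub_lshift.
split=> [v /mem_coord_subP vE|a /set1P ha i].
  exists (fun i => v (lshift l i) 0), 0; split; first by rewrite in_set1.
  rewrite addr0 {1}(col_split_delta v) [X in _ + X]big1 ?addr0 //.
  by move=> j _; rewrite vE ?scale0r //= leq_addr.
have := congr1 (fun M : V => M (lshift l i) 0) ha.
by rewrite sum_delta_inj_entry ?mxE //; apply: lshift_inj.
Qed.

Lemma free_coord_quotient : free_mod setT (coord_sub T (k + l) k).
Proof.
exists l, (fun j => delta_mx (rshift k j) 0); split; first by move=> j; rewrite inE.
split=> [v _|a /mem_coord_subP aE j].
  exists (fun j => v (rshift k j) 0), (\sum_i v (lshift l i) 0 *: delta_mx (lshift l i) 0).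
  split; first by apply: submodule_sum => //; [apply: submodule_coord_sub | apply: coord_sub_lshift].
  by rewrite {1}(col_split_delta v) addrC.
by rewrite -(sum_delta_inj_entry _ _ (@rshift_inj k l)) aE //= leq_addr.
Qed.

Lemma coord_sub_col_mx : coord_sub T (k + l) k = [set col_mx u 0 | u in [set: 'cV[T]_k]].
Proof.
apply/setP => v; apply/mem_coord_subP/imsetP => [vE|[u _ ->] i ki].
  exists (usubmx v); rewrite ?inE // -{1}(vsubmxK v); congr col_mx.
  by apply/matrixP => i j; rewrite ord1 !mxE vE //= leq_addr.
case: (splitP i) => [j ij|j ij]; first by move: (ltn_ord j); rewrite -ij ltnNge ki.
have -> : i = rshift k j by apply: val_inj.
by rewrite col_mxEd mxE.
Qed.

Lemma card_coord_sub_add : #|coord_sub T (k + l) k| = (#|T| ^ k)%N.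
Proof.
rewrite coord_sub_col_mx card_imset ?cardsT ?card_mx ?muln1 //.
by move=> u u' /(congr1 usubmx); rewrite !col_mxKu.
Qed.

End CoordSplit.

Section Vertices.
Variables (T : finComPzRingType) (n : nat).
Local Notation V := 'cV[T]_n.
Local Notation E := (coord_sub T n).
Implicit Types (P Q : 'M[T]_n) (A : {set V}).

Lemma card_coord_sub k : (k <= n)%N -> #|E k| = (#|T| ^ k)%N.
Proof.
move=> kn; have [l nE] : exists l, n = (k + l)%N by exists (n - k)%N; rewrite subnKC.
by move: (card_coord_sub_add T k l); rewrite -nE.
Qed.

Lemma rank_of_act_coord_sub P k :
  (1 != 0 :> T) -> invertible P -> (k <= n)%N -> rank_of (act P (E k)) = k.
Proof.
by move=> nz iP kn; rewrite /rank_of card_act // card_coord_sub // trunc_expnK // card_gt1_ring.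
Qed.

Lemma tits_vertex_coord_sub k :
  (1 != 0 :> T) -> (0 < k)%N -> (k < n)%N -> tits_vertex (E k).
Proof.
move=> nz k0 kn; split; first exact: submodule_coord_sub.
- exact: coord_sub_neq0 (ltnW kn).
- exact: coord_sub_neqT.
- exact: direct_summand_coord_sub.
have [l nE] : exists l, n = (k + l)%N by exists (n - k)%N; rewrite subnKC // ltnW.
by move: (free_coord_sub T k l) (free_coord_quotient T k l); rewrite -nE.
Qed.

Lemma tits_vertex_act P A : invertible P -> tits_vertex A -> tits_vertex (act P A).
Proof.
move=> iP [subA A0 AT dA [fA fAT]]; split.
- exact: submodule_act.
- by apply: contra A0 => /eqP e; rewrite -(act_set0 P) in e; rewrite (act_inj iP e).
- by apply: contra AT => /eqP e; rewrite -(act_setT iP) in e; rewrite (act_inj iP e).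
- exact: direct_summand_act.
split; first by rewrite -(act_set0 P); apply: free_mod_act.
by rewrite -(act_setT iP); apply: free_mod_act.
Qed.

Lemma tits_vertex_nontrivial A : tits_vertex A -> (1 != 0 :> T).
Proof.
case=> [[A0 _] An _ _ _]; apply/negP => /eqP e; move/negP: An; apply.
apply/eqP/setP => v; rewrite in_set1.
have -> : v = 0 by rewrite -[v]scale1r e scale0r.
by rewrite A0 eqxx.
Qed.

End Vertices.

Section FreePair.
Variables (T : finComPzRingType) (n : nat) (A : {set 'cV[T]_n}).
Variables (k1 k2 : nat) (b : 'I_k1 -> 'cV[T]_n) (d : 'I_k2 -> 'cV[T]_n).
Hypothesis subA : is_submodule A.
Hypothesis bspan : forall x, x \in A ->
  exists (a : 'I_k1 -> T) (y : 'cV[T]_n), y \in [set 0] /\ x = \sum_i a i *: b i + y.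
Hypothesis bfree : forall a : 'I_k1 -> T, \sum_i a i *: b i \in [set 0] -> forall i, a i = 0.
Hypothesis bA : forall i, b i \in A.
Hypothesis dspan : forall x, x \in [set: 'cV[T]_n] ->
  exists (a : 'I_k2 -> T) (y : 'cV[T]_n), y \in A /\ x = \sum_j a j *: d j + y.
Hypothesis dfree : forall a : 'I_k2 -> T, \sum_j a j *: d j \in A -> forall j, a j = 0.

Definition pair_comb (p : 'I_k1 -> T) (q : 'I_k2 -> T) : 'cV[T]_n :=
  \sum_i p i *: b i + \sum_j q j *: d j.

Lemma pair_comb_surj x : exists p q, pair_comb p q = x.
Proof.
have [q [y [yA ->]]] := dspan (in_setT x); have [p [z [/set1P -> ->]]] := bspan yA.
by exists p, q; rewrite /pair_comb addr0 addrC.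
Qed.

Lemma sum_scalerB (I : finType) (a a' : I -> T) (x : I -> 'cV[T]_n) :
  \sum_i (a i - a' i) *: x i = \sum_i a i *: x i - \sum_i a' i *: x i.
Proof. by rewrite -sumrB; apply: eq_bigr => i _; rewrite scalerBl. Qed.

Lemma pair_comb_inj p q p' q' : pair_comb p q = pair_comb p' q' -> p =1 p' /\ q =1 q'.
Proof.
rewrite /pair_comb => e.
have qq' : q =1 q'.
  move=> j; apply/eqP; rewrite -subr_eq0; apply/eqP.
  apply: (dfree (a := fun j => q j - q' j) _ j); rewrite sum_scalerB.
  have -> : \sum_j q j *: d j - \sum_j q' j *: d j = \sum_i (p' i - p i) *: b i.
    by rewrite sum_scalerB; apply/eqP; rewrite subr_eq addrAC -e addrC addKr.
  exact: submodule_sum.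
split=> // i; apply/eqP; rewrite -subr_eq0; apply/eqP.
apply: (bfree (a := fun i => p i - p' i) _ i); apply/set1P; apply/eqP.
rewrite sum_scalerB subr_eq0; apply/eqP; apply: (addIr (\sum_j q j *: d j)).
by rewrite [in RHS](eq_bigr _ (fun j _ => congr1 (fun c => c *: d j) (qq' j))).
Qed.

Lemma free_pair_rank : (1 != 0 :> T) -> (k1 + k2)%N = n.
Proof.
move=> nz; pose G (pq : {ffun 'I_k1 -> T} * {ffun 'I_k2 -> T}) := pair_comb pq.1 pq.2.
have Ginj : injective G.
  move=> [p q] [p' q'] /pair_comb_inj /= [pp' qq'].
  by congr (_, _); apply/ffunP.
have GT : [set G x | x in predT] = setT.
  apply/setP => x; rewrite inE; have [p [q <-]] := pair_comb_surj x.
  by apply/imsetP; exists ([ffun i => p i], [ffun j => q j]) => //; rewrite /G /pair_comb;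
    congr (_ + _); apply: eq_bigr => i _; rewrite ffunE.
apply/eqP; rewrite -(eqn_exp2l _ _ (card_gt1_ring nz)) expnD; apply/eqP.
by have := card_imset predT Ginj; rewrite GT cardsT card_prod !card_ffun !card_ord card_mx muln1.
Qed.

End FreePair.

Lemma mul_row_mx_col (T : finComPzRingType) k1 k2 (b : 'I_k1 -> 'cV[T]_(k1 + k2))
   (d : 'I_k2 -> 'cV[T]_(k1 + k2)) (v : 'cV[T]_(k1 + k2)) :
  row_mx (\matrix_(r, i) b i r 0) (\matrix_(r, j) d j r 0) *m v
  = pair_comb b d (fun i => usubmx v i 0) (fun j => dsubmx v j 0).
Proof.
rewrite -{1}(vsubmxK v) mul_row_col; congr (_ + _);
  apply/matrixP => r c; rewrite ord1 !mxE summxE; apply: eq_bigr => i _;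
  by rewrite !mxE mulrC.
Qed.

(* A basis of A followed by lifts of a basis of R^n/A is a basis of R^n. *)
Lemma free_pair_coord_sub (T : finComPzRingType) n (A : {set 'cV[T]_n}) :
  (1 != 0 :> T) -> is_submodule A -> free_mod A [set 0] -> free_mod setT A ->
  exists a Q, (a <= n)%N /\ invertible Q /\ A = act Q (coord_sub T n a).
Proof.
move=> nz subA [k1 [b [bA [bspan bfree]]]] [k2 [d [_ [dspan dfree]]]].
have := free_pair_rank subA bspan bfree bA dspan dfree nz; move=> nE; subst n.
pose Q := row_mx (\matrix_(r, i) b i r 0) (\matrix_(r, j) d j r 0).
have iQ : invertible Q.
  apply: invertible_surj => x; have [p [q <-]] := pair_comb_surj bspan dspan x.
  exists (col_mx (\col_i p i) (\col_j q j)); rewrite mul_row_mx_col col_mxKu col_mxKd.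
  by congr (_ + _); apply: eq_bigr => i _; rewrite mxE.
exists k1, Q; split; first exact: leq_addr.
split=> //; apply/setP => x; apply/idP/imsetP => [xA|[v /mem_coord_subP vE ->]].
  have [a [z [/set1P -> ->]]] := bspan _ xA; exists (col_mx (\col_i a i) 0).
    by rewrite coord_sub_col_mx; apply: imset_f; rewrite inE.
  rewrite mul_row_mx_col col_mxKu col_mxKd /pair_comb addr0 [X in _ = _ + X]big1 ?addr0.
    by apply: eq_bigr => i _; rewrite mxE.
  by move=> j _; rewrite mxE scale0r.
rewrite mul_row_mx_col /pair_comb [X in _ + X]big1 ?addr0; first exact: submodule_sum.
by move=> j _; rewrite mxE vE ?scale0r //= leq_addr.
Qed.

(** * Unimodular completion *)

Definition col_fill (T : comPzRingType) n (X : 'M[T]_n) (k : 'I_n) (w : 'cV[T]_n) : 'M[T]_n :=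
  \matrix_(r, s) (if (s < k)%N then X r s else if s == k then w r 0 else (r == s)%:R).

Definition row_fill (T : comPzRingType) n (X : 'M[T]_n) (k : 'I_n) (y : 'rV[T]_n) : 'M[T]_n :=
  \matrix_(r, s) (if (r < k)%N then X r s else if r == k then y 0 s else (r == s)%:R).

Section Fill.
Variables (T : comPzRingType) (n : nat).
Implicit Types (X M : 'M[T]_n) (k : 'I_n).

Lemma det_col_fill X k w :
  \det (col_fill X k w) = \sum_r w r 0 * cofactor (col_fill X k 0) r k.
Proof.
rewrite (expand_det_col _ k); apply: eq_bigr => r _.
rewrite mxE ltnn eqxx; congr (_ * _).
rewrite /cofactor; congr (_ * \det _).
by apply/matrixP => a b; rewrite !mxE eq_sym (negbTE (neq_lift _ _)).
Qed.

Lemma det_row_fill X k y :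
  \det (row_fill X k y) = \sum_s y 0 s * cofactor (row_fill X k 0) k s.
Proof.
rewrite (expand_det_row _ k); apply: eq_bigr => s _.
rewrite mxE ltnn eqxx; congr (_ * _).
rewrite /cofactor; congr (_ * \det _).
by apply/matrixP => a b; rewrite !mxE eq_sym (negbTE (neq_lift _ _)).
Qed.

(* The row operation is left multiplication by a unitriangular matrix. *)
Lemma det_sub_rows_above M k (c : 'I_n -> T) : (forall l : 'I_n, (k <= l)%N -> c l = 0) ->
  \det (\matrix_(r, s) (M r s - (r == k)%:R * \sum_l c l * M l s)) = \det M.
Proof.
move=> c0; pose L : 'M[T]_n := \matrix_(r, s) ((r == s)%:R - (r == k)%:R * c s).
have -> : \matrix_(r, s) (M r s - (r == k)%:R * \sum_l c l * M l s) = L *m M.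
  apply/matrixP => r s; rewrite !mxE.
  under [RHS]eq_bigr do rewrite mxE mulrBl.
  by rewrite sumrB sum_natr_eq_mulr mulr_sumr; congr (_ - _); apply: eq_bigr => l _; rewrite mulrA.
rewrite det_mulmx det_trig; last first.
  apply/is_trig_mxP => r s rs; rewrite mxE (ord_ltn_eqF rs) sub0r.
  case: eqP => [rk|_]; last by rewrite mul0r oppr0.
  by rewrite c0 ?mulr0 ?oppr0 // -rk ltnW.
rewrite big1 ?mul1r // => r _; rewrite mxE eqxx.
case: eqP => [->|_]; first by rewrite c0 ?mulr0 ?subr0.
by rewrite mul0r subr0.
Qed.

End Fill.

Section UnimodularCompletion.
Variables (T : comPzRingType) (n : nat) (X Xi : 'M[T]_n) (k : 'I_n).
Hypothesis XiX : Xi *m X = 1%:M.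
Hypothesis X_block : forall a b : 'I_n, (b < k)%N -> (k < a)%N -> X a b = 0.

Lemma left_inverse_entry a b : \sum_l Xi a l * X l b = (a == b)%:R.
Proof. by have := congr1 (fun M : 'M[T]_n => M a b) XiX; rewrite !mxE. Qed.

Lemma det_fill_delta (i : 'I_n) : (i <= k)%N ->
  \det (row_fill Xi k (delta_mx 0 i)) * \det (col_fill X k (delta_mx i 0))
    = 1 - \sum_(l < n | (l < k)%N) X i l * Xi l i.
Proof.
move=> ik; rewrite -det_mulmx.
set Y := col_fill X k (delta_mx i 0); set P := row_fill Xi k (delta_mx 0 i) *m Y.
have Ye (l s : 'I_n) : Y l s = if (s < k)%N then X l s else if s == k then (l == i)%:R else (l == s)%:R.
  by rewrite /Y !mxE /= eqxx andbT.
have P_above (r s : 'I_n) : (r < k)%N -> P r s = \sum_l Xi r l * Y l s.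
  by move=> rk; rewrite mxE; apply: eq_bigr => l _; rewrite mxE rk.
have P_row (s : 'I_n) : P k s = Y i s.
  rewrite mxE -(sum_natr_eq_mull i (fun l => Y l s)); apply: eq_bigr => l _.
  by rewrite mxE ltnn eqxx mxE /=.
have P_below (r s : 'I_n) : (k < r)%N -> P r s = Y r s.
  move=> kr; rewrite mxE -(sum_natr_eq_mulr r (fun l => Y l s)); apply: eq_bigr => l _.
  by rewrite mxE ltnNge (ltnW kr) /= ord_gtn_eqF.
have P_above_left (r s : 'I_n) : (r < k)%N -> (s < k)%N -> P r s = (r == s)%:R.
  by move=> rk sk; rewrite P_above //; under eq_bigr do rewrite Ye sk; rewrite left_inverse_entry.
pose c (l : 'I_n) := if (l < k)%N then X i l else 0.
rewrite -(@det_sub_rows_above _ _ P k c); last by move=> l; rewrite /c leqNgt => /negbTE ->.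
rewrite -det_tr det_trig; last first.
  apply/is_trig_mxP => s r sr; rewrite 2!mxE.
  case: (ltngtP r k) => [rk|kr|/val_inj rk]; rewrite ?(ord_ltn_eqF rk) ?(ord_gtn_eqF kr) ?mul0r ?subr0.
  - by rewrite P_above_left ?ord_gtn_eqF // (ltn_trans sr).
  - rewrite P_below // Ye; case: ifP => [sk|_]; first exact: X_block.
    by rewrite (ord_gtn_eqF sr); case: eqP => // _; rewrite ord_gtn_eqF // (leq_ltn_trans ik kr).
  - subst r; rewrite eqxx mul1r P_row Ye sr (bigD1 s) //= /c sr P_above_left // eqxx mulr1.
    rewrite big1 ?addr0 ?subrr // => l ls; rewrite /c; case: ifP => lk; last by rewrite mul0r.
    by rewrite P_above_left // (negbTE ls) mulr0.
rewrite (bigD1 k) //= big1 ?mulr1 => [|r rk]; last first.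
  rewrite 2!mxE (negbTE rk) mul0r subr0.
  case: (ltngtP r k) => [rlt|kr|/val_inj rk']; last by rewrite rk' eqxx in rk.
  - by rewrite P_above_left // eqxx.
  - by rewrite P_below // Ye ltnNge (ltnW kr) /= ord_gtn_eqF // eqxx.
rewrite 2!mxE eqxx mul1r P_row Ye ltnn !eqxx; congr (_ - _).
rewrite [RHS]big_mkcond; apply: eq_bigr => l _; rewrite /c; case: ifP => lk; last by rewrite mul0r.
rewrite P_above //; congr (_ * _); under eq_bigr do rewrite Ye ltnn eqxx.
by rewrite -(sum_natr_eq_mull i (fun l' => Xi l l')); apply: eq_bigr => l' _; rewrite mulrC.
Qed.

(* The cofactors of the column [k] generate the unit ideal: pairing them with the cofactors of
   the row completions of [Xi] gives [k + 1] terms summing to [(k + 1) - k] by [Xi X = 1]. *)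
Lemma unimodular_completion :
  exists w : 'cV[T]_n, (forall r : 'I_n, (k < r)%N -> w r 0 = 0) /\ \det (col_fill X k w) = 1.
Proof.
pose z (r : 'I_n) := cofactor (col_fill X k 0) r k; pose c (s : 'I_n) := cofactor (row_fill Xi k 0) k s.
have cz (r : 'I_n) : (r <= k)%N -> c r * z r = 1 - \sum_(l < n | (l < k)%N) X r l * Xi l r.
  move=> rk; rewrite -det_fill_delta // det_col_fill det_row_fill; congr (_ * _).
    by rewrite -[c r](sum_natr_eq_mull r c); apply: eq_bigr => s _; rewrite mxE eqxx.
  by rewrite -[z r](sum_natr_eq_mull r z); apply: eq_bigr => s _; rewrite mxE eqxx andbT.
exists (\col_r (if (r <= k)%N then c r else 0)); split; first by move=> r kr; rewrite mxE leqNgt kr.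
rewrite det_col_fill.
rewrite (eq_bigr (fun r : 'I_n => if (r <= k)%N then c r * z r else 0)); last first.
  by move=> r _; rewrite mxE; case: ifP; rewrite ?mul0r.
rewrite -big_mkcond /= (eq_bigr _ cz) sumrB.
have -> : \sum_(r < n | (r <= k)%N) \sum_(l < n | (l < k)%N) X r l * Xi l r
          = \sum_(l < n | (l < k)%N) (1 : T).
  rewrite exchange_big /=; apply: eq_bigr => l lk.
  transitivity (\sum_r Xi l r * X r l); last by rewrite left_inverse_entry eqxx.
  rewrite [RHS](bigID (fun r : 'I_n => (r <= k)%N)) /= [X in _ = _ + X]big1 ?addr0; last first.
    by move=> r; rewrite -ltnNge => kr; rewrite X_block // mulr0.
  by apply: eq_bigr => r _; rewrite mulrC.
rewrite (bigD1 k) //= (eq_bigl (fun r : 'I_n => (r < k)%N)); first by rewrite addrK.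
by move=> r; rewrite ltn_neqAle andbC.
Qed.

End UnimodularCompletion.

(** * Good flags are translates of coordinate flags *)

Definition coord_flag (T : finComPzRingType) n (r : seq nat) : seq {set 'cV[T]_n} :=
  map (coord_sub T n) r.

Section Flags.
Variables (T : finComPzRingType) (n : nat).
Local Notation V := 'cV[T]_n.
Local Notation E := (coord_sub T n).
Implicit Types (P Q : 'M[T]_n) (A B : {set V}) (s c : seq {set V}).

Lemma coord_sub_subset k k' : (k <= k')%N -> E k \subset E k'.
Proof.
move=> kk; apply/subsetP => v /mem_coord_subP h; apply/mem_coord_subP => i ki.
by apply: h; apply: leq_trans ki.
Qed.

Lemma coord_sub_proper k k' : (1 != 0 :> T) -> (k < k')%N -> (k' <= n)%N -> E k \proper E k'.
Proof.
move=> nz kk kn; rewrite properE coord_sub_subset ?(ltnW kk) //=.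
have kn' : (k < n)%N by apply: leq_trans kn.
apply/subsetPn; exists (delta_mx (Ordinal kn') 0); first exact: coord_sub_delta.
by apply/mem_coord_subP => /(_ (Ordinal kn') (leqnn _)); rewrite mxE !eqxx; apply/eqP.
Qed.

Lemma flag_act P s : invertible P -> is_flag s -> is_flag (map (act P) s).
Proof.
move=> iP [vs ss]; split; first by move=> _ /mapP [A As ->]; apply: tits_vertex_act (vs _ As).
by rewrite sorted_map; apply: sub_sorted ss => A B /=; rewrite act_properE.
Qed.

Lemma good_flag_act P s : invertible P -> is_good_flag s -> is_good_flag (map (act P) s).
Proof.
move=> iP [fs [c [[fc sc] sub]]]; split; first exact: flag_act.
exists (map (act P) c); split; last exact: map_subseq.
by split; [apply: flag_act | rewrite size_map].
Qed.

Lemma coord_flag_flag r : (1 != 0 :> T) -> subseq r (iota 1 n.-1) -> is_flag (coord_flag T n r).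
Proof.
move=> nz sr; split.
  move=> A /mapP [k kr ->]; have := mem_subseq sr kr; rewrite mem_iota => /andP [k1 kn].
  by apply: tits_vertex_coord_sub => //; lia.
rewrite /coord_flag sorted_map; apply: (@sub_in_sorted _ (mem (iota 1 n.-1)) ltn).
- move=> a b; rewrite !mem_iota => /andP [a1 an] /andP [b1 bn] ab /=.
  by apply: coord_sub_proper => //; lia.
- by apply/allP => x; apply: mem_subseq.
- by apply: (subseq_sorted ltn_trans sr); apply: iota_ltn_sorted.
Qed.

Lemma coord_flag_good P r : (1 != 0 :> T) -> invertible P -> subseq r (iota 1 n.-1) ->
  is_good_flag (map (act P) (coord_flag T n r)).
Proof.
move=> nz iP sr; apply: good_flag_act => //; split; first exact: coord_flag_flag.
exists (coord_flag T n (iota 1 n.-1)); split; last exact: map_subseq.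
by split; [apply: coord_flag_flag | rewrite size_map size_iota].
Qed.

Lemma tits_vertex_coordE A : tits_vertex A ->
  (0 < rank_of A < n)%N /\ exists2 Q, invertible Q & A = act Q (E (rank_of A)).
Proof.
move=> vA; have nz := tits_vertex_nontrivial vA; case: (vA) => subA A0 AT _ [fA fAT].
have [a [Q [an [iQ eA]]]] := free_pair_coord_sub nz subA fA fAT.
rewrite eA rank_of_act_coord_sub // in A0 AT *; split; last by exists Q.
apply/andP; split; first rewrite lt0n.
  by apply: contra A0 => /eqP a0; rewrite a0 coord_sub0 act_set0.
rewrite ltn_neqAle an andbT.
by apply: contra AT => /eqP an'; rewrite an' coord_subT // act_setT.
Qed.

Lemma card_tits_vertex A : tits_vertex A -> #|A| = (#|T| ^ rank_of A)%N.
Proof.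
move=> vA; have [/andP [_ /ltnW an] [Q iQ {1}->]] := tits_vertex_coordE vA.
by rewrite card_act // card_coord_sub.
Qed.

Lemma rank_of_proper A B : tits_vertex A -> tits_vertex B -> A \proper B -> (rank_of A < rank_of B)%N.
Proof.
move=> vA vB /proper_card; rewrite !card_tits_vertex // ltn_exp2l //.
exact/card_gt1_ring/(tits_vertex_nontrivial vA).
Qed.

Lemma complete_flag_rank c : is_complete_flag c -> map (@rank_of T n) c = iota 1 n.-1.
Proof.
case=> [[vc sc] szc].
have sr : sorted ltn (map (@rank_of T n) c).
  rewrite sorted_map; apply: (@sub_in_sorted _ (mem c) _ _ _ _ (allss c) sc).
  by move=> A B Ac Bc /=; apply: rank_of_proper; apply: vc.
have sub : {subset map (@rank_of T n) c <= iota 1 n.-1}.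
  move=> _ /mapP [A /vc/tits_vertex_coordE [/andP [A0 An] _] ->].
  by rewrite mem_iota add1n prednK ?A0 // (leq_ltn_trans _ An).
have := uniq_min_size (sorted_uniq ltn_trans ltnn sr) sub.
rewrite size_map size_iota szc leqnn => /(_ isT) [_].
by apply: (irr_sorted_eq ltn_trans ltnn sr (iota_ltn_sorted 1 n.-1)).
Qed.

End Flags.

Section CompleteFlags.
Variables (T : finComPzRingType) (n : nat).
Local Notation V := 'cV[T]_n.
Local Notation E := (coord_sub T n).
Implicit Types (P Q : 'M[T]_n) (s c : seq {set V}).

(* Extend the basis of [act P (E k)] given by the first [k] columns of [P] to a basis of
   [act Q (E k.+1)]; the new column comes from [unimodular_completion]. *)
Lemma act_coord_sub_extend P Q (k : 'I_n) : invertible P -> invertible Q ->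
  act P (E k) \subset act Q (E k.+1) ->
  exists2 P', invertible P' &
    act P' (E k.+1) = act Q (E k.+1) /\ forall r s : 'I_n, (s < k)%N -> P' r s = P r s.
Proof.
case=> Pi [PPi PiP] [Qi [QQi QiQ]] PQ.
pose X := Qi *m P; pose Xi := Pi *m Q.
have XiX : Xi *m X = 1%:M by rewrite /X /Xi mulmxA -(mulmxA Pi) QQi mulmx1 PiP.
have X_block (a b : 'I_n) : (b < k)%N -> (k < a)%N -> X a b = 0.
  apply: (@act_coord_sub_zero _ _ _ k k.+1); rewrite /X actM.
  by rewrite -[E k.+1](actK _ QiQ); apply: imsetS.
have [w [w0 detY]] := unimodular_completion XiX X_block.
pose Y := col_fill X k w.
have iY : invertible Y by apply: (@invertible_det _ _ _ 1); rewrite detY mulr1.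
exists (Q *m Y); first by apply: invertibleM => //; exists Qi.
split.
  rewrite actM act_coord_sub_stable // => r s sk kr; rewrite mxE.
  case: ifP => [/X_block -> //|/negbT]; rewrite -leqNgt => ks.
  by rewrite ifT ?w0 //; apply/eqP/val_inj => /=; lia.
move=> r s sk; have <- : Q *m X = P by rewrite /X mulmxA QQi mul1mx.
by rewrite !mxE; apply: eq_bigr => l _; rewrite mxE sk.
Qed.

Lemma complete_flag_coord c : is_complete_flag c ->
  exists2 P, invertible P & c = map (act P) (coord_flag T n (iota 1 n.-1)).
Proof.
move=> cc; have rc := complete_flag_rank cc; case: (cc) => [[vc sc] szc].
have c_rank j : (j < size c)%N -> rank_of (nth set0 c j) = j.+1.
  by move=> jc; rewrite -(nth_map set0 0%N) // rc nth_iota -?szc // add1n.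
suff [P iP hP] : exists2 P, invertible P &
    forall j, (j < size c)%N -> nth set0 c j = act P (E j.+1).
  exists P => //; apply: (eq_from_nth (x0 := set0)); first by rewrite !size_map size_iota.
  by move=> j jc; rewrite hP // (nth_map set0) ?size_map ?size_iota -?szc // (nth_map 0%N)
    ?size_iota -?szc // nth_iota -?szc // add1n.
have adj j : (j.+1 < size c)%N -> nth set0 c j \subset nth set0 c j.+1.
  have ptr : transitive (fun A B : {set V} => A \proper B) by move=> B A C /proper_trans; apply.
  move=> jc; apply: proper_sub; apply: (sorted_ltn_nth ptr set0 sc); rewrite ?inE //.
  exact: ltnW.
elim: {-2}(size c) (leqnn (size c)) => [|k IH] kc; first by exists 1%:M => //; apply: invertible1.
have [P iP hP] := IH (ltnW kc).
have kn : (k < n)%N by move: kc; rewrite szc; case: (n) => //= n' kn'; lia.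
have [/andP [_ _] [Q iQ eQ]] := tits_vertex_coordE (vc _ (mem_nth set0 kc)).
rewrite c_rank // in eQ.
have PQ : act P (E k) \subset act Q (E (Ordinal kn).+1).
  case: k {IH} kc kn hP eQ => [|k] kc kn hP eQ.
    rewrite coord_sub0 act_set0 sub1set -(mulmx0 _ Q).
    by apply/mem_act/mem_coord_subP => i _; rewrite mxE.
  by rewrite -hP // -eQ adj.
have [P' iP' [eP' cols]] := act_coord_sub_extend (k := Ordinal kn) iP iQ PQ.
exists P' => // j; rewrite ltnS leq_eqVlt => /orP [/eqP ->|jk]; first by rewrite eQ eP'.
by rewrite hP //; symmetry; apply: act_coord_sub_cols => r s sj; apply: cols (leq_trans sj jk).
Qed.

Lemma good_flag_coord s : is_good_flag s -> exists P r,
  [/\ invertible P, subseq r (iota 1 n.-1) & s = map (act P) (coord_flag T n r)].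
Proof.
case=> _ [c [cc sc]]; have [P iP ce] := complete_flag_coord cc.
move: sc; rewrite ce => /subseqP [m _ ->].
by exists P, (mask m (iota 1 n.-1)); rewrite mask_subseq /coord_flag !map_mask.
Qed.

Lemma coord_flag_rank P r : (1 != 0 :> T) -> invertible P -> subseq r (iota 1 n.-1) ->
  map (@rank_of T n) (map (act P) (coord_flag T n r)) = r.
Proof.
move=> nz iP sr; rewrite /coord_flag -!map_comp -[RHS]map_id; apply/eq_in_map => k kr /=.
by apply: rank_of_act_coord_sub => //; move: (mem_subseq sr kr); rewrite mem_iota; lia.
Qed.

End CompleteFlags.

(** * Reduction modulo an ideal in the Jacobson radical *)

Lemma ideal_sub_maximal (R : finComPzRingType) (I : {set R}) :
  is_ideal I -> 1 \notin I -> exists M, is_maximal_ideal M /\ I \subset M.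
Proof.
move: {2}(#|~: I|) (leqnn #|~: I|) => m; elim: m I => [|m IH] I hm iI nI.
  move: hm; rewrite leqn0 cards_eq0 => /eqP e.
  by move: nI; rewrite -in_setC e inE.
case: (classic (is_maximal_ideal I)) => [mI|nmI]; first by exists I.
have : ~ (forall J, is_ideal J -> I \subset J -> J = I \/ 1 \in J).
  by move=> h; apply: nmI; split => //; split.
move/not_all_ex_not => [J HJ].
have [iJ HJ'] := imply_to_and _ _ HJ; have [IJ HJ''] := imply_to_and _ _ HJ'.
have [JI nJ] := not_or_and _ _ HJ''.
have pIJ : I \proper J by rewrite properEneq IJ andbT; apply/eqP => e; apply: JI.
have [M [mM JM]] : exists M, is_maximal_ideal M /\ J \subset M.
  apply: IH => //; last by apply/negP.
  by have := proper_card pIJ; have := cardsC I; have := cardsC J; lia.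
by exists M; split => //; apply: subset_trans JM; apply: proper_sub.
Qed.

Lemma jacobson_unit (R : finComPzRingType) (j : R) : in_jacobson j -> exists u, (1 - j) * u = 1.
Proof.
move=> jJ; apply: NNPP => nu.
pose I := [set (1 - j) * r | r in [set: R]].
have iI : is_ideal I.
  split; first by apply/imsetP; exists 0; rewrite ?inE ?mulr0.
  split=> [x y /imsetP [a _ ->] /imsetP [b _ ->]|r x /imsetP [a _ ->]].
    by apply/imsetP; exists (a + b); rewrite ?inE ?mulrDr.
  by apply/imsetP; exists (r * a); rewrite ?inE // mulrCA.
have nI : 1 \notin I by apply/negP => /imsetP [u _ e]; apply: nu; exists u.
have [M [mM IM]] := ideal_sub_maximal iI nI.
have jM' : 1 - j \in M by apply: (subsetP IM); apply/imsetP; exists 1; rewrite ?inE ?mulr1.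
have := jJ M mM; case: mM => [[_ [MD _]] [nM _]] jM.
by move/negP: nM; apply; have := MD _ _ jM' jM; rewrite subrK.
Qed.

Lemma invertible_map (R S : finComPzRingType) (f : {rmorphism R -> S}) n (P : 'M[R]_n) :
  invertible P -> invertible (map_mx f P).
Proof.
by case=> Q [PQ _]; apply: (@invertible_mulmx1 _ _ _ (map_mx f Q)); rewrite -map_mxM PQ map_mx1.
Qed.

Lemma reduce_act (R S : finComPzRingType) (f : {rmorphism R -> S}) n (g : 'M[R]_n) A :
  reduce f (act g A) = act (map_mx f g) (reduce f A).
Proof. by rewrite /reduce /act -!imset_comp; apply: eq_imset => v /=; rewrite map_mxM. Qed.

Definition ring_lift (R S : finComPzRingType) (f : {rmorphism R -> S}) (y : S) : R :=
  if y == 0 then 0 else odflt 0 [pick x | f x == y].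

Section Reduction.
Variables (R S : finComPzRingType) (f : {rmorphism R -> S}) (n : nat).
Hypothesis f_surj : forall y : S, exists x : R, f x = y.
Hypothesis f_jacobson : forall x : R, f x = 0 -> in_jacobson x.
Local Notation red := (@reduce R S f n).
Local Notation lift := (ring_lift f).

Lemma ring_liftK y : f (lift y) = y.
Proof.
rewrite /ring_lift; case: eqP => [->|_]; first by rewrite rmorph0.
case: pickP => [x /eqP //|none]; case: (f_surj y) => x fx; by move: (none x); rewrite fx eqxx.
Qed.

Lemma ring_lift0 : lift 0 = 0.
Proof. by rewrite /ring_lift eqxx. Qed.

Lemma map_ring_liftK m p (M : 'M[S]_(m, p)) : map_mx f (map_mx lift M) = M.
Proof. by apply/matrixP => i j; rewrite !mxE ring_liftK. Qed.

Lemma unit_lift (d : R) : (exists e', f d * e' = 1) -> exists e, d * e = 1.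
Proof.
case=> e' de; case: (f_surj e') => e0 fe0.
have : in_jacobson (1 - d * e0) by apply: f_jacobson; rewrite rmorphB rmorph1 rmorphM fe0 de subrr.
by move/jacobson_unit => [u hu]; exists (e0 * u); rewrite mulrA -hu opprB addrC subrK.
Qed.

Lemma invertible_lift (Q : 'M[R]_n) : invertible (map_mx f Q) -> invertible Q.
Proof.
move=> /det_invertible [e' de]; rewrite det_map_mx in de.
by have [e he] := unit_lift (ex_intro _ e' de); apply: invertible_det he.
Qed.

Lemma nontrivial_reduce : (1 != 0 :> R) -> (1 != 0 :> S).
Proof.
move=> nzR; apply/eqP => e.
have [u] := jacobson_unit (f_jacobson (etrans (rmorph1 f) e)); rewrite subrr mul0r.
by move/esym/eqP; rewrite (negbTE nzR).
Qed.

Lemma reduce_coord_sub k : red (coord_sub R n k) = coord_sub S n k.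
Proof.
apply/setP => w; apply/imsetP/mem_coord_subP => [[v /mem_coord_subP vE ->] i ki|wE].
  by rewrite mxE vE // rmorph0.
exists (map_mx lift w); last by rewrite map_ring_liftK.
by apply/mem_coord_subP => i ki; rewrite mxE wE // ring_lift0.
Qed.

Lemma reduce_coord_flag (P : 'M[R]_n) r :
  map red (map (act P) (coord_flag R n r)) = map (act (map_mx f P)) (coord_flag S n r).
Proof. by rewrite /coord_flag -!map_comp; apply: eq_map => k /=; rewrite reduce_act reduce_coord_sub. Qed.

Lemma reduce_act_congruence (g : 'M[R]_n) (s : seq {set 'cV[R]_n}) :
  map_mx f g = 1%:M -> map red (map (act g) s) = map red s.
Proof. by move=> fg; rewrite -map_comp; apply: eq_map => A /=; rewrite reduce_act fg act1. Qed.

End Reduction.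

Section SmallFlags.
Variables (T : finComPzRingType) (n : nat).
Implicit Types s : seq {set 'cV[T]_n}.

Lemma good_flag_size s : is_good_flag s -> (size s <= n.-1)%N.
Proof. by case=> _ [c [[_ <-] sc]]; apply: size_subseq. Qed.

Lemma good_flag_nil : n.-1 = 0%N -> is_good_flag ([::] : seq {set 'cV[T]_n}).
Proof.
move=> n1; have fl : is_flag ([::] : seq {set 'cV[T]_n}) by split => // A; rewrite in_nil.
by split => //; exists [::]; split => //; split => //; rewrite n1.
Qed.

Lemma good_flag_nontrivial s : is_good_flag s -> (0 < n.-1)%N -> (1 != 0 :> T).
Proof.
case=> _ [[|A c] [[[vc _] szc] _]] n1; first by rewrite -szc in n1.
exact: (tits_vertex_nontrivial (vc A (mem_head _ _))).
Qed.

End SmallFlags.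

Section Fibres.
Variables (R S : finComPzRingType) (f : {rmorphism R -> S}) (n : nat).
Hypothesis f_surj : forall y : S, exists x : R, f x = y.
Hypothesis f_jacobson : forall x : R, f x = 0 -> in_jacobson x.
Local Notation red := (@reduce R S f n).
Local Notation lift := (ring_lift f).

Lemma good_flag_lift (t : seq {set 'cV[S]_n}) :
  is_good_flag t -> exists2 s, is_good_flag s & map red s = t.
Proof.
move=> gt; case: (posnP n.-1) => [n1|n1].
  by exists [::]; [apply: good_flag_nil | move: (good_flag_size gt); rewrite n1; case: t {gt}].
have nzS := good_flag_nontrivial gt n1.
have nzR : (1 != 0 :> R) by apply: contra nzS => /eqP e; rewrite -(rmorph1 f) e rmorph0.
have [Pb [r [iPb sr ->]]] := good_flag_coord gt.
exists (map (act (map_mx lift Pb)) (coord_flag R n r)).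
  by apply: coord_flag_good => //; apply: (invertible_lift f_surj f_jacobson); rewrite (map_ring_liftK f_surj).
by rewrite (reduce_coord_flag f_surj) (map_ring_liftK f_surj).
Qed.

(* Lifting with [lift 0 = 0] keeps the zero pattern of a stabiliser of [E k]. *)
Lemma coord_sub_stabilizer_lift (Qb : 'M[S]_n) k : invertible (map_mx lift Qb) ->
  act Qb (coord_sub S n k) = coord_sub S n k ->
  act (map_mx lift Qb) (coord_sub R n k) = coord_sub R n k.
Proof.
move=> iQ stab; apply: act_coord_sub_stable => // a b bk ka.
by rewrite mxE (@act_coord_sub_zero _ _ Qb k k) ?ring_lift0 ?stab.
Qed.

Lemma congruence_transitive (s s' : seq {set 'cV[R]_n}) :
  is_good_flag s -> is_good_flag s' -> map red s = map red s' ->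
  exists g, [/\ invertible g, map_mx f g = 1%:M & map (act g) s = s'].
Proof.
move=> gs gs' ered; case: (posnP n.-1) => [n1|n1].
  move: (good_flag_size gs) (good_flag_size gs'); rewrite n1.
  case: s {gs ered} => // _; case: s' {gs'} => // _.
  by exists 1%:M; rewrite map_mx1; split => //; apply: invertible1.
have nzR := good_flag_nontrivial gs n1.
have nzS := nontrivial_reduce f_jacobson nzR.
have [P [r [iP sr es]]] := good_flag_coord gs.
have [P' [r' [iP' sr' es']]] := good_flag_coord gs'.
move: ered; rewrite es es' !(reduce_coord_flag f_surj) => e.
have rr : r = r'.
  rewrite -(coord_flag_rank nzS (invertible_map f iP) sr).
  by rewrite e (coord_flag_rank nzS (invertible_map f iP') sr').
subst r'; case: (iP) => Pi [PPi PiP]; case: (iP') => P'i [P'P'i P'iP'].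
pose Qb := map_mx f Pi *m map_mx f P'; pose Q := map_mx lift Qb.
have fQ : map_mx f Q = Qb by apply: (map_ring_liftK f_surj).
have iQ : invertible Q.
  apply: (invertible_lift f_surj f_jacobson); rewrite fQ.
  by apply: invertibleM; apply: invertible_map => //; exists P.
have stabQ k : k \in r -> act Q (coord_sub R n k) = coord_sub R n k.
  move=> kr; apply: coord_sub_stabilizer_lift => //.
  move/eq_in_map: e => /(_ _ (map_f (coord_sub S n) kr)) e.
  by rewrite actM -e -actM -map_mxM PiP map_mx1 act1.
case: (iQ) => Qi [QQi QiQ].
exists (P' *m Qi *m Pi); split.
- by do 2?apply: invertibleM => //; [exists Q | exists P].
- have h : map_mx f Qi *m map_mx f Pi *m map_mx f P' = 1%:M.
    by rewrite -mulmxA -/Qb -fQ -map_mxM QiQ map_mx1.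
  rewrite !map_mxM -mulmxA.
  have -> : map_mx f Qi *m map_mx f Pi = map_mx f P'i.
    by rewrite -[LHS]mulmx1 -(map_mx1 f) -P'P'i map_mxM mulmxA h mul1mx.
  by rewrite -map_mxM P'P'i map_mx1.
rewrite /coord_flag -!map_comp; apply/eq_in_map => k kr /=.
by rewrite !actM (actK _ PiP) -{1}(stabQ k kr) (actK _ QiQ).
Qed.

End Fibres.

(** * Chains and the averaged lift *)

Definition good_flagb (T : finComPzRingType) n (s : seq {set 'cV[T]_n}) : bool :=
  if excluded_middle_informative (is_good_flag s) then true else false.

Lemma good_flagP (T : finComPzRingType) n (s : seq {set 'cV[T]_n}) :
  reflect (is_good_flag s) (good_flagb s).
Proof. by rewrite /good_flagb; case: excluded_middle_informative => h; constructor. Qed.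

Section Chains.
Variables (n : nat) (K : fieldType).

Lemma push_comp (R1 R2 R3 : finComPzRingType) m (phi : {set 'cV[R2]_n} -> {set 'cV[R3]_n})
    (psi : {set 'cV[R1]_n} -> {set 'cV[R2]_n}) (z : m.-tuple {set 'cV[R1]_n} -> K) t :
  push phi (push psi z) t = push (fun A => phi (psi A)) z t.
Proof.
rewrite /push; under eq_bigr do rewrite big_mkcond.
rewrite exchange_big /= [RHS]big_mkcond; apply: eq_bigr => s _; rewrite -big_mkcondr /=.
rewrite (eq_bigl (fun u : m.-tuple _ => (map psi s == u :> seq _) && (map phi u == t :> seq _)));
  last by move=> u; rewrite andbC.
case: ifP => e.
  rewrite (big_pred1 (map_tuple psi s)) // => u /=.
  apply/andP/eqP => [[/eqP a b]|->]; first by apply: val_inj.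
  by split => //; rewrite -map_comp.
rewrite big_pred0 // => u; apply/andP => -[/eqP a /eqP b]; move: e.
by rewrite -b -a -map_comp eqxx.
Qed.

Lemma eq_push (R1 R2 : finComPzRingType) m (phi phi' : {set 'cV[R1]_n} -> {set 'cV[R2]_n})
    (z : m.-tuple {set 'cV[R1]_n} -> K) t :
  phi =1 phi' -> push phi z t = push phi' z t.
Proof. by move=> e; apply: eq_bigl => s; rewrite (eq_map e). Qed.

Lemma push_inj (R1 R2 : finComPzRingType) m (phi : {set 'cV[R1]_n} -> {set 'cV[R2]_n})
    (z : m.-tuple {set 'cV[R1]_n} -> K) s :
  injective phi -> push phi z (map_tuple phi s) = z s.
Proof.
move=> ip; rewrite /push (big_pred1 s) // => s' /=; apply/eqP/eqP => [e|->//].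
by apply: val_inj; apply: (inj_map ip).
Qed.

Variable T : finComPzRingType.
Local Notation V := 'cV[T]_n.

Lemma is_boundary_zero m (c : m.-tuple {set V} -> K) : (forall t, c t = 0) -> is_boundary c.
Proof.
move=> c0; exists (fun _ => 0); split; first by move=> s; rewrite eqxx.
by move=> t; rewrite c0 /bd big1 // => s _; rewrite big1 // => i _; case: ifP; rewrite ?mulr0.
Qed.

(* No good flag has [n] terms: in the top degree there are no boundaries. *)
Lemma top_boundary_zero (c : n.-1.-tuple {set V} -> K) : is_boundary c -> forall t, c t = 0.
Proof.
move=> [d [sd hd]] t; rewrite hd /bd big1 // => s _; rewrite big1 // => i _.
case: ifP => // _; case: (eqVneq (d s) 0) => [->|/sd]; first by rewrite mulr0.
by case=> [//|/good_flag_size]; rewrite size_tuple ltnn.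
Qed.

Lemma supported_good (c : n.-1.-tuple {set V} -> K) t : supported c -> c t != 0 -> is_good_flag t.
Proof.
move=> sc /sc [/eqP n1|//].
have -> : (t : seq _) = [::] by apply: size0nil; rewrite size_tuple.
exact: good_flag_nil.
Qed.

Lemma face_subseq i (s : seq {set V}) : subseq (face i s) s.
Proof.
rewrite /face -{3}(cat_take_drop i s); apply: cat_subseq; first exact: subseq_refl.
by rewrite -[i.+1]add1n -drop_drop; apply: drop_subseq.
Qed.

Lemma face_good i (s : seq {set V}) : is_good_flag s -> is_good_flag (face i s).
Proof.
case=> [[vs ss] [c [cc sc]]]; have fs := face_subseq i s.
have ptr : transitive (fun A B : {set V} => A \proper B) by move=> B A C /proper_trans; apply.
split; first split.
- by move=> A /(mem_subseq fs); apply: vs.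
- exact: subseq_sorted fs ss.
by exists c; split => //; apply: subseq_trans sc.
Qed.

Lemma size_face i (s : seq {set V}) : (i < size s)%N -> size (face i s) = (size s).-1.
Proof. by move=> iS; rewrite /face size_cat size_take size_drop iS; lia. Qed.

End Chains.

Lemma face_map (T1 T2 : finComPzRingType) n (h : {set 'cV[T1]_n} -> {set 'cV[T2]_n}) i s :
  face i (map h s) = map h (face i s).
Proof. by rewrite /face map_cat map_take map_drop. Qed.

Lemma char0_natr_neq0 (K : fieldType) (N : nat) : [pchar K] =i pred0 -> (0 < N)%N -> N%:R != 0 :> K.
Proof. by move=> /pcharf0P K0 N0; rewrite K0 -lt0n. Qed.

Section AveragedLift.
Variables (R S : finComPzRingType) (f : {rmorphism R -> S}) (n : nat) (K : fieldType).
Hypothesis f_surj : forall y : S, exists x : R, f x = y.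
Hypothesis f_jacobson : forall x : R, f x = 0 -> in_jacobson x.
Hypothesis K_char0 : [pchar K] =i pred0.
Local Notation red := (@reduce R S f n).

Definition fibre_size m (t : seq {set 'cV[S]_n}) : nat :=
  #|[set s : m.-tuple {set 'cV[R]_n} | good_flagb s && (map red s == t)]|.

Definition face_fibre_size m i (t : seq {set 'cV[S]_n}) (u : seq {set 'cV[R]_n}) : nat :=
  #|[set s : m.-tuple {set 'cV[R]_n} | [&& good_flagb s, map red s == t & face i s == u]]|.

Definition avg_lift m (w : m.-tuple {set 'cV[S]_n} -> K) (s : m.-tuple {set 'cV[R]_n}) : K :=
  if good_flagb s then w (map_tuple red s) / (fibre_size m (map red s))%:R else 0.

Lemma fibre_size_gt0 m (t : seq {set 'cV[S]_n}) :
  size t = m -> is_good_flag t -> (0 < fibre_size m t)%N.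
Proof.
move=> st gt; have [s gs e] := good_flag_lift f_surj f_jacobson gt.
have sz : size s == m by rewrite -(size_map red) e st.
by apply/card_gt0P; exists (Tuple sz); rewrite inE /= e eqxx andbT; apply/good_flagP.
Qed.

Lemma face_fibre_size_le m i t (u1 u2 : seq {set 'cV[R]_n}) :
  is_good_flag u1 -> is_good_flag u2 -> map red u1 = map red u2 ->
  (face_fibre_size m i t u1 <= face_fibre_size m i t u2)%N.
Proof.
move=> g1 g2 e; have [g [ig fg gu]] := congruence_transitive f_surj f_jacobson g1 g2 e.
rewrite /face_fibre_size -(@card_imset _ _ (map_tuple (act g))); last first.
  by move=> a b /(congr1 val) /(inj_map (fun A B => @act_inj _ _ g A B ig)) ab; apply: val_inj.
apply: subset_leq_card; apply/subsetP => _ /imsetP [s + ->].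
rewrite !inE => /and3P [/good_flagP gs rs /eqP fs]; apply/and3P; split.
- by apply/good_flagP; apply: good_flag_act.
- by rewrite /= reduce_act_congruence.
- by rewrite /= face_map fs gu.
Qed.

(* Counting the flags above [t] through their [i]-th faces, which all lie in one orbit of
   the congruence subgroup. *)
Lemma fibre_size_face m i (t : m.-tuple {set 'cV[S]_n}) (u : m.-1.-tuple {set 'cV[R]_n}) :
  (i < m)%N -> is_good_flag u -> face i t = map red u ->
  fibre_size m t = (fibre_size m.-1 (map red u) * face_fibre_size m i t u)%N.
Proof.
move=> im gu ft.
pose p (s : m.-tuple {set 'cV[R]_n}) : m.-1.-tuple {set 'cV[R]_n} := insubd u (face i s).
have pE s : val (p s) = face i s by rewrite /p insubdK // -topredE /= size_face ?size_tuple.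
rewrite /fibre_size -sum1_card.
rewrite (partition_big p (fun u' => good_flagb u' && (map red u' == map red u))); last first.
  move=> s; rewrite inE => /andP [/good_flagP gs /eqP rs]; apply/andP; split.
    by apply/good_flagP; rewrite pE; apply: face_good.
  by rewrite pE -face_map rs ft.
rewrite (eq_bigr (fun _ => face_fibre_size m i t u)); last first.
  move=> u' /andP [/good_flagP gu' /eqP ru'].
  rewrite (_ : \sum_(s | _) 1 = face_fibre_size m i t u'); last first.
    rewrite /face_fibre_size -sum1_card; apply: eq_bigl => s; rewrite !inE -andbA.
    by congr [&& _, _ & _]; apply/eqP/eqP => [<-|e]; [rewrite pE | apply: val_inj; rewrite pE].
  by apply/eqP; rewrite eqn_leq !face_fibre_size_le.
by rewrite sum_nat_const cardE /= -cardE; congr (_ * _)%N; apply: eq_card => u'; rewrite inE.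
Qed.

Lemma avg_lift_face_sum m (w : m.-tuple {set 'cV[S]_n} -> K) i (u : m.-1.-tuple {set 'cV[R]_n}) :
  supported w -> (i < m)%N -> is_good_flag u ->
  \sum_(s : m.-tuple {set 'cV[R]_n}) (if face i s == u :> seq _ then avg_lift w s else 0)
  = (\sum_(t : m.-tuple {set 'cV[S]_n}) (if face i t == map red u :> seq _ then w t else 0))
      / (fibre_size m.-1 (map red u))%:R.
Proof.
move=> sw im gu.
rewrite (partition_big (map_tuple red) predT) //= mulr_suml; apply: eq_bigr => t _.
transitivity (\sum_(s in [set s : m.-tuple _ | [&& good_flagb s, map red s == t & face i s == u]])
                 (w t / (fibre_size m t)%:R)).
  rewrite big_mkcond [RHS]big_mkcond; apply: eq_bigr => s _; rewrite inE.
  case: (eqVneq (map_tuple red s) t) => [<-|ne] /=.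
    by rewrite eqxx /avg_lift; case: (face i s == u :> seq _); case: (good_flagb s).
  suff -> : (map red s == t) = false by rewrite andbF.
  by apply/negbTE; apply: contra ne => /eqP e; apply/eqP; apply: val_inj.
rewrite sumr_const -/(face_fibre_size m i t u).
case: (eqVneq (w t) 0) => [->|wt0]; first by rewrite !mul0r mul0rn; case: ifP; rewrite ?mul0r.
have gt : is_good_flag t by case: (sw t wt0) => [/eqP m0|//]; rewrite m0 in im.
case: ifP => [/eqP ft|ft].
  have e := fibre_size_face im gu ft.
  have Nt0 : (0 < fibre_size m t)%N by apply: fibre_size_gt0; rewrite ?size_tuple.
  have C0 : (0 < face_fibre_size m i t u)%N by move: Nt0; rewrite e muln_gt0 => /andP [].
  rewrite e natrM invfM -[_ *+ face_fibre_size m i t u]mulr_natr -!mulrA mulVf ?mulr1 //.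
  exact: char0_natr_neq0.
suff -> : face_fibre_size m i t u = 0%N by rewrite mulr0n mul0r.
apply/eqP; rewrite cards_eq0; apply/eqP/setP => s; rewrite !inE.
apply/negP => /and3P [_ /eqP rs /eqP fsu]; move/negP: ft; apply.
by rewrite -rs face_map fsu.
Qed.

Lemma avg_lift_cycle m (w : m.-tuple {set 'cV[S]_n} -> K) : is_cycle w -> is_cycle (avg_lift w).
Proof.
move=> [sw bw]; split.
  by move=> s; rewrite /avg_lift; case: ifP => [/good_flagP gs _|_]; [right | rewrite eqxx].
move=> u; rewrite /bd exchange_big /=.
case: (boolP (good_flagb u)) => [/good_flagP gu|ngu]; last first.
  rewrite big1 // => i _; rewrite big1 // => s _; case: ifP => // /eqP fsu.
  rewrite /avg_lift; case: ifP => [/good_flagP gs|_]; last by rewrite mulr0.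
  by move/negP: ngu; case; apply/good_flagP; rewrite -fsu; apply: face_good.
transitivity ((\sum_(i < m) \sum_(t : m.-tuple {set 'cV[S]_n})
     (if face i t == map red u :> seq _ then (-1) ^+ i * w t else 0))
     / (fibre_size m.-1 (map red u))%:R).
  rewrite mulr_suml; apply: eq_bigr => i _.
  rewrite (eq_bigr (fun s : m.-tuple _ => (-1) ^+ i * (if face i s == u :> seq _ then avg_lift w s else 0)));
    last by move=> s _; case: ifP; rewrite ?mulr0.
  rewrite -mulr_sumr avg_lift_face_sum // mulrA mulr_sumr; congr (_ * _).
  by apply: eq_bigr => t _; case: ifP; rewrite ?mulr0.
by have := bw (map_tuple red u); rewrite /bd exchange_big /= => ->; rewrite mul0r.
Qed.

End AveragedLift.

(** * Invariants of the Steinberg module *)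

Section Steinberg.
Variables (R S : finComPzRingType) (f : {rmorphism R -> S}) (n : nat) (K : fieldType).
Hypothesis f_surj : forall y : S, exists x : R, f x = y.
Hypothesis f_jacobson : forall x : R, f x = 0 -> in_jacobson x.
Hypothesis K_char0 : [pchar K] =i pred0.
Local Notation red := (@reduce R S f n).
Local Notation chain := (n.-1.-tuple {set 'cV[R]_n} -> K).

Lemma push_reduce_act (g : 'M[R]_n) (z : chain) t :
  push red (push (act g) z) t = push (act (map_mx f g)) (push red z) t.
Proof. by rewrite !push_comp; apply: eq_push => A /=; rewrite reduce_act. Qed.

Lemma push_reduce_fibre m (z : m.-tuple {set 'cV[R]_n} -> K) (t : m.-tuple {set 'cV[S]_n}) (c : K) :
  (forall s : m.-tuple _, map red s = t -> z s = if good_flagb s then c else 0) ->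
  push red z t = c *+ fibre_size f m t.
Proof.
move=> zc; rewrite /push (eq_bigr (fun s : m.-tuple _ => if good_flagb s then c else 0)); last first.
  by move=> s /eqP /zc.
by rewrite -big_mkcondr /= -sumr_const; apply: eq_bigl => s; rewrite inE andbC.
Qed.

Lemma act_invariant_chain (z : chain) (g : 'M[R]_n) : invertible g ->
  is_boundary (fun t => push (act g) z t - z t) -> forall s, z (map_tuple (act g) s) = z s.
Proof.
move=> ig /top_boundary_zero /(_ (map_tuple (act g) _)) zg s.
by move/eqP: (zg s); rewrite push_inj ?subr_eq0 => [/eqP //|A B]; apply: act_inj.
Qed.

(* An invariant cycle is constant on each fibre of the reduction, as the congruence subgroup
   acts transitively on it; its image therefore counts each fibre with a nonzero multiplicity. *)
Lemma invariant_cycle_reduce_boundary (z : chain) : is_cycle z ->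
  (forall g, invertible g /\ map_mx f g = 1%:M -> is_boundary (fun t => push (act g) z t - z t)) ->
  is_boundary (push red z) -> is_boundary z.
Proof.
move=> [sz _] invz /top_boundary_zero rz; apply: is_boundary_zero => s.
apply/eqP; apply: contraT => zs0; have gs := supported_good sz zs0.
have := rz (map_tuple red s); rewrite (@push_reduce_fibre _ z _ (z s)) => [/eqP|s' /= e].
  rewrite -mulr_natr mulf_eq0 (negbTE zs0) (negbTE (char0_natr_neq0 K_char0 _)) //.
  by apply/card_gt0P; exists s; rewrite inE eqxx andbT; apply/good_flagP.
case: (boolP (good_flagb s')) => [/good_flagP gs'|/good_flagP ngs'].
  have [g [ig fg gss']] := congruence_transitive f_surj f_jacobson gs gs' (esym e).
  have -> : s' = map_tuple (act g) s by apply: val_inj.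
  exact: (act_invariant_chain ig (invz g (conj ig fg))).
by apply/eqP; apply: contraT => /(supported_good sz).
Qed.

Lemma avg_lift_act (w : n.-1.-tuple {set 'cV[S]_n} -> K) (g : 'M[R]_n) s :
  invertible g -> map_mx f g = 1%:M -> avg_lift f w (map_tuple (act g) s) = avg_lift f w s.
Proof.
case=> [gi [ggi gig]] fg; have igi : invertible gi by exists g.
have red_g : map red (map (act g) s) = map red s by apply: reduce_act_congruence.
rewrite /avg_lift; have -> : good_flagb (map_tuple (act g) s) = good_flagb s.
  apply/good_flagP/good_flagP => /= [h|]; last by apply: good_flag_act; exists gi.
  by move: (good_flag_act igi h); rewrite -map_comp (eq_map (fun A => actK A gig)) map_id.
have -> : map_tuple red (map_tuple (act g) s) = map_tuple red s by apply: val_inj; rewrite /= red_g.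
by rewrite /= red_g.
Qed.

Lemma push_act_avg_lift (w : n.-1.-tuple {set 'cV[S]_n} -> K) (g : 'M[R]_n) t :
  invertible g -> map_mx f g = 1%:M -> push (act g) (avg_lift f w) t = avg_lift f w t.
Proof.
move=> ig fg; case: (ig) => gi [ggi gig]; have igi : invertible gi by exists g.
have fgi : map_mx f gi = 1%:M by rewrite -[LHS]mulmx1 -fg -map_mxM gig map_mx1.
have -> : t = map_tuple (act g) (map_tuple (act gi) t).
  by apply: val_inj; rewrite /= -map_comp (eq_map (fun A => actK A ggi)) map_id.
by rewrite push_inj ?avg_lift_act // => A B; apply: act_inj.
Qed.

Lemma push_reduce_avg_lift (w : n.-1.-tuple {set 'cV[S]_n} -> K) :
  is_cycle w -> forall t, push red (avg_lift f w) t = w t.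
Proof.
move=> [sw _] t; rewrite (@push_reduce_fibre _ _ _ (w t / (fibre_size f n.-1 t)%:R)); last first.
  move=> s e; rewrite /avg_lift; have -> : map_tuple red s = t by apply: val_inj.
  by rewrite e.
case: (eqVneq (w t) 0) => [->|wt0]; first by rewrite mul0r mul0rn.
rewrite -[LHS]mulr_natr divfK // char0_natr_neq0 // fibre_size_gt0 ?size_tuple //.
exact: supported_good sw wt0.
Qed.

End Steinberg.

Theorem theoremF (R S : finComPzRingType) (f : {rmorphism R -> S})
    (K : fieldType) (n : nat) :
  (0 < n)%N ->
  [pchar K] =i pred0 ->
  (forall y : S, exists x : R, f x = y) ->
  (forall x : R, f x = 0 -> in_jacobson x) ->
  let Gamma (g : 'M[R]_n) := invertible g /\ map_mx f g = 1%:M in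
  let invariant (z : n.-1.-tuple {set 'cV[R]_n} -> K) :=
    forall g, Gamma g -> is_boundary (fun t => push (act g) z t - z t) in
  (forall g : 'M[R]_n, invertible g ->
     forall (z : n.-1.-tuple {set 'cV[R]_n} -> K) t,
       push (@reduce R S f n) (push (act g) z) t
       = push (act (map_mx f g)) (push (@reduce R S f n) z) t) /\
  (forall z : n.-1.-tuple {set 'cV[R]_n} -> K,
     is_cycle z -> invariant z ->
     is_boundary (push (@reduce R S f n) z) -> is_boundary z) /\
  (forall w : n.-1.-tuple {set 'cV[S]_n} -> K, is_cycle w ->
     exists z : n.-1.-tuple {set 'cV[R]_n} -> K,
       is_cycle z /\ invariant z /\
       is_boundary (fun t => push (@reduce R S f n) z t - w t)).
Proof.
move=> _ K0 f_surj f_jac Gamma invariant; split; [|split].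
- by move=> g _ z t; apply: push_reduce_act.
- by move=> z; apply: invariant_cycle_reduce_boundary.
move=> w cw; exists (avg_lift f w); split; first exact: avg_lift_cycle.
split=> [g [ig fg]|]; apply: is_boundary_zero => t; apply/eqP; rewrite subr_eq0; apply/eqP.
  exact: push_act_avg_lift.
exact: push_reduce_avg_lift.
Qed.
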